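(* Under the standing assumptions, assume $n> m$ and that all kept singular values $S_{kk}$ are strictly positive. Set $\widetilde{dU}_2:=(\mathbb{1}_n-UU^\dagger)dU$ and $\widetilde{dV}_2:=(\mathbb{1}_m-VV^\dagger)dV$. Then $\widetilde{dV}_2$ satisfies the Sylvester equation $$\widetilde{dV}_2\,S^2-A^\dagger A\,\widetilde{dV}_2=(\mathbb{1}_m-VV^\dagger)\,dA^\dagger U S+A^\dagger(\mathbb{1}_n-UU^\dagger)\,dA\,V,$$ and $$\widetilde{dU}_2=(\mathbb{1}_n-UU^\dagger)\,dA\,V S^{-1}+A\,\widetilde{dV}_2\,S^{-1}.$$
   Context: Let $n,m\ge1$, $r=\min(n,m)$ and $1\le t<r$. Let $\tau\mapsto A(\tau)\in\mathbb{C}^{n\times m}$ be differentiable, and suppose there are differentiable maps $\tau\mapsto U\in\mathbb{C}^{n\times t}$, $S\in\mathbb{R}^{t\times t}$, $V\in\mathbb{C}^{m\times t}$, $U_\perp\in\mathbb{C}^{n\times(r-t)}$, $S_\perp\in\mathbb{R}^{(r-t)\times(r-t)}$, $V_\perp\in\mathbb{C}^{m\times(r-t)}$ such that for every $\tau$: $A=USV^\dagger+U_\perp S_\perp V_\perp^\dagger$ is a (thin) singular value decomposition, i.e. $S,S_\perp$ are diagonal with nonnegative entries, $(U\,|\,U_\perp)$ and $(V\,|\,V_\perp)$ have orthonormal columns. Here $d$ denotes the derivative with respect to $\tau$, $^\dagger$ the conjugate transpose, $\mathbb{1}_k$ the $k\times k$ identity. *)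

From HB Require Import structures.
From mathcomp Require Import all_boot all_order all_algebra.
From mathcomp Require Import all_classical all_reals all_analysis.
From mathcomp Require Import complex.
Set Implicit Arguments. Unset Strict Implicit. Unset Printing Implicit Defensive.
Import Order.TTheory GRing.Theory Num.Theory.
Local Open Scope ring_scope.

Definition adj (R : rcfType) (p q : nat) (A : 'M[R[i]]_(p, q)) : 'M[R[i]]_(q, p) :=
  (map_mx (@conjc R) A)^T.

Definition cmx (R : rcfType) (p q : nat) (A : 'M[R]_(p, q)) : 'M[R[i]]_(p, q) :=
  map_mx (fun x : R => (x%:C)%C) A.

Definition rmx_differentiable (R : realType) (p q : nat) (F : R -> 'M[R]_(p, q)) :=
  forall (i : 'I_p) (j : 'I_q) (tau : R), derivable (fun s => F s i j) tau 1.

Definition cmx_differentiable (R : realType) (p q : nat) (F : R -> 'M[R[i]]_(p, q)) :=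
  forall (i : 'I_p) (j : 'I_q) (tau : R),
    derivable (fun s => complex.Re (F s i j)) tau 1 /\ derivable (fun s => complex.Im (F s i j)) tau 1.

Definition cmx_deriv (R : realType) (p q : nat) (F : R -> 'M[R[i]]_(p, q)) (tau : R)
  : 'M[R[i]]_(p, q) :=
  \matrix_(i, j) Complex (derive1 (fun s => complex.Re (F s i j)) tau) (derive1 (fun s => complex.Im (F s i j)) tau).

From HB Require Import structures.
From mathcomp Require Import all_boot all_order all_algebra.
From mathcomp Require Import all_classical all_reals all_analysis.
From mathcomp Require Import complex.
From mathcomp Require Import ring.
Import Order.TTheory GRing.Theory Num.Theory.
Set Implicit Arguments. Unset Strict Implicit.
Local Open Scope ring_scope.

(* The singular value decomposition gives A V = U S and A^† U = V S.
   Differentiating both identities and multiplying on the left by the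
   complementary projectors P_U = 1 - U U^† and P_V = 1 - V V^† kills the
   terms containing dS, because P_U U = 0 and P_V V = 0.  Since moreover
   P_U A = A P_V and P_V A^† = A^† P_U, this leaves
     P_U dU S = P_U dA V + A (P_V dV)  and  P_V dV S = P_V dA^† U + A^† (P_U dU).
   The first identity, multiplied by the invertible S^{-1}, is the formula for
   P_U dU; substituting it into the second one multiplied by S gives the
   Sylvester equation. *)

Section ComplexParts.
Variable R : pzRingType.

Lemma ReD (x y : R[i]) : complex.Re (x + y) = complex.Re x + complex.Re y.
Proof. by case: x; case: y. Qed.

Lemma ImD (x y : R[i]) : complex.Im (x + y) = complex.Im x + complex.Im y.
Proof. by case: x; case: y. Qed.

Lemma Re_sum (I : Type) (r : seq I) (f : I -> R[i]) :
  complex.Re (\sum_(k <- r) f k) = \sum_(k <- r) complex.Re (f k).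
Proof. by apply: (big_morph _ ReD). Qed.

Lemma Im_sum (I : Type) (r : seq I) (f : I -> R[i]) :
  complex.Im (\sum_(k <- r) f k) = \sum_(k <- r) complex.Im (f k).
Proof. by apply: (big_morph _ ImD). Qed.

End ComplexParts.

Section ComplexPartsMul.
Variable R : fieldType.

Lemma ReM (x y : R[i]) :
  complex.Re (x * y) = complex.Re x * complex.Re y - complex.Im x * complex.Im y.
Proof. by case: x; case: y. Qed.

Lemma ImM (x y : R[i]) :
  complex.Im (x * y) = complex.Re x * complex.Im y + complex.Im x * complex.Re y.
Proof. by case: x => a b; case: y => c d /=; rewrite addrC. Qed.

End ComplexPartsMul.

Section MatrixDerivative.
Variable R : realType.

Definition cmx_is_derive p q (F : R -> 'M[R[i]]_(p, q)) (tau : R) (D : 'M[R[i]]_(p, q)) :=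
  forall i j,
    is_derive tau 1 (fun s => complex.Re (F s i j)) (complex.Re (D i j)) /\
    is_derive tau 1 (fun s => complex.Im (F s i j)) (complex.Im (D i j)).

Lemma cmx_derive_is_derive p q (F : R -> 'M[R[i]]_(p, q)) tau :
  cmx_differentiable F -> cmx_is_derive F tau (cmx_deriv F tau).
Proof.
move=> dF i j; have [dRe dIm] := dF i j tau.
by rewrite mxE /= !derive1E; split; apply: derivableP.
Qed.

Lemma cmx_is_derive_unique p q (F : R -> 'M[R[i]]_(p, q)) tau D1 D2 :
  cmx_is_derive F tau D1 -> cmx_is_derive F tau D2 -> D1 = D2.
Proof.
move=> dF1 dF2; apply/matrixP => i j.
have [Re1 Im1] := dF1 i j; have [Re2 Im2] := dF2 i j.
move: (D1 i j) (D2 i j) Re1 Im1 Re2 Im2 => [a b] [c d] /= Re1 Im1 Re2 Im2.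
by rewrite -(@derive_val _ _ _ _ _ _ _ Re1) -(@derive_val _ _ _ _ _ _ _ Im1) !derive_val.
Qed.

Lemma cmx_is_deriveM p q r (F : R -> 'M[R[i]]_(p, q)) (G : R -> 'M[R[i]]_(q, r)) tau dF dG :
  cmx_is_derive F tau dF -> cmx_is_derive G tau dG ->
  cmx_is_derive (fun s => F s *m G s) tau (dF *m G tau + F tau *m dG).
Proof.
move=> hF hG i j.
have -> : (fun s => complex.Re ((F s *m G s) i j)) =
    \sum_(k < q) (fun s => complex.Re (F s i k) * complex.Re (G s k j)
                           - complex.Im (F s i k) * complex.Im (G s k j)).
  by rewrite fct_sumE; apply: funext => s; rewrite mxE Re_sum; apply: eq_bigr => k _; rewrite ReM.
have -> : (fun s => complex.Im ((F s *m G s) i j)) =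
    \sum_(k < q) (fun s => complex.Re (F s i k) * complex.Im (G s k j)
                           + complex.Im (F s i k) * complex.Re (G s k j)).
  by rewrite fct_sumE; apply: funext => s; rewrite mxE Im_sum; apply: eq_bigr => k _; rewrite ImM.
rewrite !mxE ReD ImD !Re_sum !Im_sum -!big_split /=.
split; apply: is_derive_sum => k; have [ReF ImF] := hF i k; have [ReG ImG] := hG k j.
- apply: is_derive_eq (is_deriveB (is_deriveM ReF ReG) (is_deriveM ImF ImG)) _.
  rewrite !ReM /GRing.scale /=; ring.
- apply: is_derive_eq (is_deriveD (is_deriveM ReF ImG) (is_deriveM ImF ReG)) _.
  rewrite !ImM /GRing.scale /=; ring.
Qed.

Lemma cmx_is_derive_adj p q (F : R -> 'M[R[i]]_(p, q)) tau dF :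
  cmx_is_derive F tau dF -> cmx_is_derive (fun s => adj (F s)) tau (adj dF).
Proof.
move=> hF i j; have [ReF ImF] := hF j i; rewrite /adj !mxE.
have ReJ (z : R[i]) : complex.Re z^*%C = complex.Re z by case: z.
have ImJ (z : R[i]) : complex.Im z^*%C = - complex.Im z by case: z.
split; under eq_fun do rewrite !mxE ?ReJ ?ImJ.
- by rewrite ReJ.
- by rewrite ImJ; apply: is_deriveN.
Qed.

Lemma cmx_is_derive_cmx p q (S : R -> 'M[R]_(p, q)) tau :
  rmx_differentiable S ->
  cmx_is_derive (fun s => cmx (S s)) tau (cmx (\matrix_(i, j) 'D_1 (fun s => S s i j) tau)).
Proof.
move=> hS i j; rewrite /cmx !mxE /=.
split; under eq_fun do rewrite mxE /=.
- exact: derivableP.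
- exact: is_derive_cst.
Qed.

End MatrixDerivative.

Section Adjoint.
Variable R : rcfType.

Lemma adjM p q r (A : 'M[R[i]]_(p, q)) (B : 'M[R[i]]_(q, r)) :
  adj (A *m B) = adj B *m adj A.
Proof. by rewrite /adj map_mxM trmx_mul. Qed.

Lemma adjD p q (A B : 'M[R[i]]_(p, q)) : adj (A + B) = adj A + adj B.
Proof. by apply/matrixP => i j; rewrite /adj !mxE rmorphD. Qed.

Lemma adjB p q (A B : 'M[R[i]]_(p, q)) : adj (A - B) = adj A - adj B.
Proof. by apply/matrixP => i j; rewrite /adj !mxE rmorphB. Qed.

Lemma adjK p q (A : 'M[R[i]]_(p, q)) : adj (adj A) = A.
Proof. by apply/matrixP => i j; rewrite /adj !mxE conjcK. Qed.

Lemma adj1 p : adj (1%:M : 'M[R[i]]_p) = 1%:M.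
Proof. by apply/matrixP => i j; rewrite /adj !mxE conjc_nat eq_sym. Qed.

Lemma adj_row_mx p q r (A : 'M[R[i]]_(p, q)) (B : 'M[R[i]]_(p, r)) :
  adj (row_mx A B) = col_mx (adj A) (adj B).
Proof. by rewrite /adj map_row_mx tr_row_mx. Qed.

Lemma adj_cmx_diag p (S : 'M[R]_p) : is_diag_mx S -> adj (cmx S) = cmx S.
Proof.
move=> /is_diag_mxP diagS; apply/matrixP => i j; rewrite /adj /cmx !mxE conjc_real.
by case: (eqVneq i j) => [-> //|neq_ij]; rewrite !diagS // eq_sym.
Qed.

Lemma cmx_diag_unitmx p (S : 'M[R]_p) :
  is_diag_mx S -> (forall k, 0 < S k k) -> cmx S \in unitmx.
Proof.
move=> /diag_mxP [d ->] S_gt0.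
rewrite unitmxE (_ : cmx (diag_mx d) = map_mx (real_complex R) (diag_mx d)) //.
rewrite det_map_mx unitfE fmorph_eq0 det_diag; apply/prodf_neq0 => k _.
by have := S_gt0 k; rewrite mxE eqxx mulr1n => /gt_eqF ->.
Qed.

Lemma orthonormal_row_mx p q r (A : 'M[R[i]]_(p, q)) (B : 'M[R[i]]_(p, r)) :
  adj (row_mx A B) *m row_mx A B = 1%:M ->
  [/\ adj A *m A = 1%:M, adj A *m B = 0 & adj B *m A = 0].
Proof.
by rewrite adj_row_mx mul_col_row scalar_mx_block => /eq_block_mx [-> -> -> _].
Qed.

Lemma adj_compl_proj p q (U : 'M[R[i]]_(p, q)) :
  adj (1%:M - U *m adj U) = 1%:M - U *m adj U.
Proof. by rewrite adjB adj1 adjM adjK. Qed.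

Lemma compl_proj_mulmx p q (U : 'M[R[i]]_(p, q)) :
  adj U *m U = 1%:M -> (1%:M - U *m adj U) *m U = 0.
Proof. by move=> UU; rewrite mulmxBl mul1mx -mulmxA UU mulmx1 subrr. Qed.

End Adjoint.

Section ThinSVD.
Variables (R : rcfType) (n m t k : nat).
Variables (A : 'M[R[i]]_(n, m)) (U : 'M[R[i]]_(n, t)) (Up : 'M[R[i]]_(n, k)).
Variables (V : 'M[R[i]]_(m, t)) (Vp : 'M[R[i]]_(m, k)).
Variables (Sc : 'M[R[i]]_t) (Spc : 'M[R[i]]_k).
Hypothesis svdA : A = U *m Sc *m adj V + Up *m Spc *m adj Vp.
Hypothesis orthoU : adj (row_mx U Up) *m row_mx U Up = 1%:M.
Hypothesis orthoV : adj (row_mx V Vp) *m row_mx V Vp = 1%:M.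
Hypothesis adj_Sc : adj Sc = Sc.

Local Notation PU := (1%:M - U *m adj U).
Local Notation PV := (1%:M - V *m adj V).

Lemma svd_mulmx_V : A *m V = U *m Sc.
Proof.
have [VV _ VpV] := orthonormal_row_mx orthoV.
by rewrite svdA mulmxDl -!mulmxA VV VpV mulmx1 !mulmx0 addr0.
Qed.

Lemma svd_adj_mulmx_U : adj A *m U = V *m Sc.
Proof.
have [UU _ UpU] := orthonormal_row_mx orthoU.
rewrite svdA adjD !adjM !adjK adj_Sc mulmxDl -!mulmxA UU UpU.
by rewrite mulmx1 !mulmx0 addr0.
Qed.

Lemma svd_compl_projU : PU *m A = A *m PV.
Proof.
have adjU_A : adj U *m A = Sc *m adj V by rewrite -[LHS]adjK adjM adjK svd_adj_mulmx_U adjM adj_Sc.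
by rewrite mulmxBl mulmxBr mul1mx mulmx1 -mulmxA adjU_A !mulmxA svd_mulmx_V.
Qed.

Lemma svd_compl_projV : PV *m adj A = adj A *m PU.
Proof. by rewrite -adj_compl_proj -[in RHS]adj_compl_proj -!adjM svd_compl_projU. Qed.

Variables (dA : 'M[R[i]]_(n, m)) (dU : 'M[R[i]]_(n, t)) (dV : 'M[R[i]]_(m, t)).
Variable dSc : 'M[R[i]]_t.
Hypothesis dAV : dA *m V + A *m dV = dU *m Sc + U *m dSc.
Hypothesis dAU : adj dA *m U + adj A *m dU = dV *m Sc + V *m dSc.

Lemma svd_compl_proj_dU : PU *m dU *m Sc = PU *m dA *m V + A *m (PV *m dV).
Proof.
have [UU _ _] := orthonormal_row_mx orthoU.
have := congr1 (mulmx PU) dAV.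
by rewrite !mulmxDr !mulmxA compl_proj_mulmx // mul0mx addr0 svd_compl_projU => <-.
Qed.

Lemma svd_compl_proj_dV : PV *m dV *m Sc = PV *m adj dA *m U + adj A *m (PU *m dU).
Proof.
have [VV _ _] := orthonormal_row_mx orthoV.
have := congr1 (mulmx PV) dAU.
by rewrite !mulmxDr !mulmxA compl_proj_mulmx // mul0mx addr0 svd_compl_projV => <-.
Qed.

Lemma svd_sylvester :
  PV *m dV *m (Sc *m Sc) - adj A *m A *m (PV *m dV)
    = PV *m adj dA *m U *m Sc + adj A *m PU *m dA *m V.
Proof.
rewrite mulmxA svd_compl_proj_dV mulmxDl -(mulmxA (adj A) (PU *m dU)) svd_compl_proj_dU.
by rewrite mulmxDr -addrA !mulmxA addrK.
Qed.

Lemma svd_compl_proj_dU_invmx :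
  Sc \in unitmx -> PU *m dU = PU *m dA *m V *m invmx Sc + A *m (PV *m dV) *m invmx Sc.
Proof. by move=> Sc_unit; rewrite -mulmxDl -svd_compl_proj_dU mulmxK. Qed.

End ThinSVD.
Theorem mainTheorem8 (R : realType) (n m t : nat)
  (A : R -> 'M[R[i]]_(n, m))
  (U : R -> 'M[R[i]]_(n, t)) (S : R -> 'M[R]_t) (V : R -> 'M[R[i]]_(m, t))
  (Up : R -> 'M[R[i]]_(n, minn n m - t)) (Sp : R -> 'M[R]_(minn n m - t))
  (Vp : R -> 'M[R[i]]_(m, minn n m - t)) :
  (1 <= m)%N -> (1 <= t)%N -> (t < minn n m)%N ->
  cmx_differentiable A ->
  cmx_differentiable U -> rmx_differentiable S -> cmx_differentiable V ->
  cmx_differentiable Up -> rmx_differentiable Sp -> cmx_differentiable Vp ->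
  (forall tau, A tau = U tau *m cmx (S tau) *m adj (V tau)
                       + Up tau *m cmx (Sp tau) *m adj (Vp tau)) ->
  (forall tau, is_diag_mx (S tau) /\ (forall k, 0 <= S tau k k)) ->
  (forall tau, is_diag_mx (Sp tau) /\ (forall k, 0 <= Sp tau k k)) ->
  (forall tau, adj (row_mx (U tau) (Up tau)) *m row_mx (U tau) (Up tau) = 1%:M) ->
  (forall tau, adj (row_mx (V tau) (Vp tau)) *m row_mx (V tau) (Vp tau) = 1%:M) ->
  (m < n)%N ->
  (forall tau k, 0 < S tau k k) ->
  forall tau : R,
    let dA := cmx_deriv A tau in
    let dU := cmx_deriv U tau in
    let dV := cmx_deriv V tau in
    let Sc := cmx (S tau) in
    let PU := 1%:M - U tau *m adj (U tau) in
    let PV := 1%:M - V tau *m adj (V tau) in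
    let dU2 := PU *m dU in
    let dV2 := PV *m dV in
    dV2 *m (Sc *m Sc) - adj (A tau) *m A tau *m dV2
      = PV *m adj dA *m U tau *m Sc + adj (A tau) *m PU *m dA *m V tau
    /\ dU2 = PU *m dA *m V tau *m invmx Sc + A tau *m dV2 *m invmx Sc.
Proof.
move=> _ _ _ A_diff U_diff S_diff V_diff _ _ _ svdA diagS _ orthoU orthoV _ S_gt0.
move=> tau dA dU dV Sc PU PV dU2 dV2.
have adj_S s : adj (cmx (S s)) = cmx (S s) by exact: adj_cmx_diag (diagS s).1.
pose dSc := cmx (\matrix_(i, j) 'D_1 (fun s => S s i j) tau).
have dS_is_derive := cmx_is_derive_cmx tau S_diff.
have dAV : dA *m V tau + A tau *m dV = dU *m Sc + U tau *m dSc.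
  apply: cmx_is_derive_unique
    (cmx_is_deriveM (cmx_derive_is_derive tau A_diff) (cmx_derive_is_derive tau V_diff)) _.
  rewrite (funext (fun s => svd_mulmx_V (svdA s) (orthoV s))).
  exact: cmx_is_deriveM (cmx_derive_is_derive tau U_diff) dS_is_derive.
have dAU : adj dA *m U tau + adj (A tau) *m dU = dV *m Sc + V tau *m dSc.
  apply: cmx_is_derive_unique (cmx_is_deriveM
    (cmx_is_derive_adj (cmx_derive_is_derive tau A_diff)) (cmx_derive_is_derive tau U_diff)) _.
  rewrite (funext (fun s => svd_adj_mulmx_U (svdA s) (orthoU s) (adj_S s))).
  exact: cmx_is_deriveM (cmx_derive_is_derive tau V_diff) dS_is_derive.
have Sc_unit : Sc \in unitmx by exact: cmx_diag_unitmx (diagS tau).1 (S_gt0 tau).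
have sylvester := svd_sylvester (svdA tau) (orthoU tau) (orthoV tau) (adj_S tau) dAV dAU.
have dU2E := svd_compl_proj_dU_invmx (svdA tau) (orthoU tau) (orthoV tau) (adj_S tau) dAV Sc_unit.
(* [1%:M] in the goal is built from a different (convertible) ring instance
   than in the lemmas, so both are closed by conversion rather than by [apply]. *)
by split.
Qed.
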